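(* In the setting described in the context, for every $i$ with $1\le i<m-1$, $\Phi(p_i,p_{i+1})\le 2\cdot L_1(\overline{p}_i,\overline{q}_i)$.
   Context: $P$ is a finite set of points in the plane, $s,t\in P$ distinct, and coordinates are chosen so that $t=(0,0)$ and $s$ lies in $C_2^t$ below the line $\ell_t^-=\{x+y=0\}$. Cones: $C_0^v=\{x\ge v_x,y\le v_y\}$, $C_1^v=\{x\ge v_x,y\ge v_y\}$, $C_2^v=\{x\le v_x,y\ge v_y\}$, $C_3^v=\{x\le v_x,y\le v_y\}$ with bisector directions $(1,-1),(1,1),(-1,1),(-1,-1)$. The $\Theta_4$-graph of $P$ has, for each $v\in P$ and cone $C_i^v$ containing a point of $P\setminus\{v\}$, a directed edge from $v$ to a point $w$ of $(P\setminus\{v\})\cap C_i^v$ minimizing the projection of $w-v$ onto the bisector direction (the neighbour of $v$ in $C_i^v$). For a point $p$, $\ell_p^+$ is the line through $p$ of slope $+1$, and $\overline{p}$ denotes the intersection point of $\ell_t^-$ and $\ell_p^+$. $L_1$ denotes the $L_1$ distance. Algorithm: for a vertex $v$, let $T(v,\ell_t^-)=C_1^v\cap\{x+y\le0\}$ if $v_x+v_y<0$, $T(v,\ell_t^-)=C_3^v\cap\{x+y\ge0\}$ if $v_x+v_y>0$, and $\{v\}$ if $v_x+v_y=0$; $v$ is clean if $T(v,\ell_t^-)$ contains no point of $P$ other than $v$. Starting at $v=s$, while $v\ne t$: if $v$ is not clean, take a sweeping step (go to the neighbour of $v$ in $C_1^v$, resp. $C_3^v$); otherwise take a greedy step (go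 to the neighbour of $v$ in the cone $C_i^v$ containing $t$). Let $(p_1,q_1),\dots,(p_{m-1},q_{m-1})$ be, in order, the edges traversed by greedy steps, and set $p_m=t$. Potential: for $1\le i<m-1$, $\Phi(p_i,p_{i+1})=L_1(p_i,q_i)+L_1(q_i,\overline{p}_{i+1})-L_1(p_i,\overline{p}_i)$. *)

From HB Require Import structures.
From mathcomp Require Import all_boot all_order all_algebra.
Set Implicit Arguments. Unset Strict Implicit. Unset Printing Implicit Defensive.
Import Order.TTheory GRing.Theory Num.Theory.
Local Open Scope ring_scope.

Section Theta4.
Variable R : realFieldType.
Notation pt := (R * R)%type.

Definition L1 (a b : pt) : R := `|a.1 - b.1| + `|a.2 - b.2|.

Definition inC (i : 'I_4) (v w : pt) : bool :=
  match val i with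
  | 0 => (v.1 <= w.1) && (w.2 <= v.2)
  | 1 => (v.1 <= w.1) && (v.2 <= w.2)
  | 2 => (w.1 <= v.1) && (v.2 <= w.2)
  | _ => (w.1 <= v.1) && (w.2 <= v.2)
  end.

(* projection of w - v onto the bisector direction of C_i
   ((1,-1),(1,1),(-1,1),(-1,-1)); unnormalised, which does not affect minimisation *)
Definition bproj (i : 'I_4) (v w : pt) : R :=
  match val i with
  | 0 => (w.1 - v.1) - (w.2 - v.2)
  | 1 => (w.1 - v.1) + (w.2 - v.2)
  | 2 => - (w.1 - v.1) + (w.2 - v.2)
  | _ => - (w.1 - v.1) - (w.2 - v.2)
  end.

Definition is_nb (P : seq pt) (v : pt) (i : 'I_4) (w : pt) : Prop :=
  [/\ w \in P, w != v, inC i v w &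
      forall u, u \in P -> u != v -> inC i v u -> bproj i v w <= bproj i v u].

Definition theta4_graph (P : seq pt) (nb : pt -> 'I_4 -> pt) : Prop :=
  forall v i, v \in P ->
    (exists u, [/\ u \in P, u != v & inC i v u]) -> is_nb P v i (nb v i).

(* the region T(v, l_t^-) with l_t^- = {x + y = 0} *)
Definition inT (v u : pt) : bool :=
  if v.1 + v.2 < 0 then inC (inord 1) v u && (u.1 + u.2 <= 0)
  else if 0 < v.1 + v.2 then inC (inord 3) v u && (0 <= u.1 + u.2)
  else u == v.

Definition clean (P : seq pt) (v : pt) : bool :=
  all (fun u => (u == v) || ~~ inT v u) P.

Definition sweep_cone (v : pt) : 'I_4 :=
  if v.1 + v.2 < 0 then inord 1 else inord 3.

Definition route_step (P : seq pt) (nb : pt -> 'I_4 -> pt) (t : pt)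
    (v w : pt) : bool :=
  (v != t) &&
  (if clean P v then [exists i : 'I_4, inC i v t && (w == nb v i)]
   else w == nb v (sweep_cone v)).

Definition greedy_edges (P : seq pt) (s : pt) (vs : seq pt) : seq (pt * pt) :=
  [seq e <- zip (s :: vs) vs | clean P e.1].

(* \overline{p}: intersection of l_t^- = {x+y=0} with the slope +1 line through p *)
Definition bar (p : pt) : pt := ((p.1 - p.2) / 2%:R, (p.2 - p.1) / 2%:R).

Definition Phi (pi qi pi1 : pt) : R :=
  L1 pi qi + L1 qi (bar pi1) - L1 pi (bar pi).

End Theta4.

From HB Require Import structures.
From mathcomp Require Import all_boot all_order all_algebra.
From mathcomp Require Import lra.
Import Order.TTheory GRing.Theory Num.Theory.
Local Open Scope ring_scope.
Set Implicit Arguments. Unset Strict Implicit.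

(* After the greedy step p -> q, the route only takes sweeping steps until it
   reaches the next clean vertex p', and every sweeping step stays inside the
   triangle T(q, l_t^-); hence bar p' lies on the segment of l_t^- cut out by
   that triangle and L1(q, bar p') <= |q_x + q_y| = L1(q, bar q).  Since p is
   clean, the cone of p containing t is C_0 or C_2, so q - p lies in an
   antidiagonal quadrant and L1(bar p, bar q) = L1(p, q).  The bound then
   follows from |q_x + q_y| - |p_x + p_y| <= L1(p, q). *)

Section Theta4Routing.
Variable R : realFieldType.
Implicit Types (P : seq (R * R)) (nb : R * R -> 'I_4 -> R * R) (p q u v w t : R * R).

Ltac case_norms :=
  repeat match goal with |- context[ `|?e| ] => case: (ger0P e) => ? end.

Lemma L1_bar p : L1 p (bar p) = `|p.1 + p.2|.
Proof. by rewrite /L1 /bar /=; case_norms; lra. Qed.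

Definition antidiag p q : bool := inC (inord 0) p q || inC (inord 2) p q.

Lemma antidiagE p q :
  antidiag p q = (p.1 <= q.1) && (q.2 <= p.2) || (q.1 <= p.1) && (p.2 <= q.2).
Proof. by rewrite /antidiag /inC /= !inordK. Qed.

Lemma L1_bar_antidiag p q : antidiag p q -> L1 (bar p) (bar q) = L1 p q.
Proof.
by rewrite antidiagE /L1 /bar /= => /orP[/andP[? ?]|/andP[? ?]]; case_norms; lra.
Qed.

Lemma normD_sub_le_L1 p q : `|q.1 + q.2| - `|p.1 + p.2| <= L1 p q.
Proof. by rewrite /L1; case_norms; lra. Qed.

Lemma Phi_le_antidiag p q p' : antidiag p q ->
  L1 q (bar p') <= `|q.1 + q.2| ->
  Phi p q p' <= 2%:R * L1 (bar p) (bar q).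
Proof.
move=> /L1_bar_antidiag -> Hp'; rewrite /Phi L1_bar.
have := normD_sub_le_L1 p q; lra.
Qed.

Lemma inTE q v : inT q v =
  if q.1 + q.2 < 0 then [&& q.1 <= v.1, q.2 <= v.2 & v.1 + v.2 <= 0]
  else if 0 < q.1 + q.2 then [&& v.1 <= q.1, v.2 <= q.2 & 0 <= v.1 + v.2]
  else v == q.
Proof. by rewrite /inT /inC /= !inordK // -!andbA. Qed.

Lemma inT_refl q : inT q q.
Proof.
rewrite inTE; case: ltrP => [q1|_]; first by rewrite !lexx ltW.
by case: ltrP => [q2|_]; rewrite ?lexx ?ltW.
Qed.

Lemma inT_trans q v w : inT q v -> inT v w -> inT q w.
Proof.
rewrite !inTE; case: (ltrP (q.1 + q.2) 0) => [q1|q1].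
  case/and3P => ? ? ?; case: (ltrP (v.1 + v.2) 0) => [v1|v1].
    by case/and3P => ? ? ?; apply/and3P; split; lra.
  by case: (ltrP 0 (v.1 + v.2)) => [v2 _|_ /eqP ->]; [lra | apply/and3P].
case: (ltrP 0 (q.1 + q.2)) => [q2|q2]; last by move=> /eqP ->; rewrite !ltNge q1 q2.
case/and3P => ? ? ?; case: (ltrP (v.1 + v.2) 0) => [v1 _|_]; first lra.
case: (ltrP 0 (v.1 + v.2)) => [v2|_ /eqP ->]; last exact/and3P.
by case/and3P => ? ? ?; apply/and3P; split; lra.
Qed.

Lemma L1_bar_inT q v : inT q v -> L1 q (bar v) <= `|q.1 + q.2|.
Proof.
rewrite inTE /L1 /bar /=; case: ltrP => _; first by case/and3P => *; case_norms; lra.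
case: ltrP => _; first by case/and3P => *; case_norms; lra.
by move/eqP ->; case_norms; lra.
Qed.

Lemma origin_in_T p :
  (p.1 <= 0) && (p.2 <= 0) || (0 <= p.1) && (0 <= p.2) -> inT p (0, 0).
Proof.
case: p => a b /= H; rewrite inTE /=.
case: (ltrP (a + b) 0) => ?; [|case: (ltrP 0 (a + b)) => ?];
  case/orP: H => /andP[? ?];
  by [apply/and3P; split; lra | exfalso; lra | apply/eqP; congr pair; lra].
Qed.

Lemma clean_notin_T P v u : clean P v -> u \in P -> u != v -> ~~ inT v u.
Proof. by move=> /allP cl /cl; case: eqP. Qed.

Lemma not_clean_witness P v :
  ~~ clean P v -> exists2 u, u \in P & (u != v) && inT v u.
Proof. by case/allPn => u uP; rewrite negb_or negbK; exists u. Qed.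

Lemma inT_sweep_cone v u : inT v u -> inC (sweep_cone v) v u.
Proof.
rewrite inTE /sweep_cone /inC; case: ltrP => _; first by rewrite /= inordK // => /and3P[-> ->].
rewrite /= inordK //; case: ltrP => _; first by case/and3P => -> ->.
by move/eqP ->; rewrite !lexx.
Qed.

Lemma sweep_is_nb P nb v : theta4_graph P nb -> v \in P -> ~~ clean P v ->
  is_nb P v (sweep_cone v) (nb v (sweep_cone v)).
Proof.
move=> th vP /not_clean_witness[u uP /andP[uv /inT_sweep_cone Cu]].
by apply: th => //; exists u.
Qed.

(* The sweeping neighbour is at most as far along the bisector as the witness of
   non-cleanness, which lies on the near side of l_t^-. *)
Lemma sweep_nb_inT P nb v : theta4_graph P nb -> v \in P -> ~~ clean P v ->
  inT v (nb v (sweep_cone v)).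
Proof.
move=> th vP ncl; have [_ _ + min] := sweep_is_nb th vP ncl.
have [u uP /andP[uv Tu]] := not_clean_witness ncl.
move: Tu (min u uP uv (inT_sweep_cone Tu)).
rewrite /sweep_cone /inC /bproj !inTE; case: (ltrP (v.1 + v.2) 0) => _;
  last case: (ltrP 0 (v.1 + v.2)) => _; rewrite /= ?inordK //; last by rewrite (negbTE uv).
all: by move=> /and3P[? ? ?] ? /andP[? ?]; apply/and3P; split; lra.
Qed.

Lemma route_step_in P nb t v w : t \in P -> theta4_graph P nb -> v \in P ->
  route_step P nb t v w -> w \in P.
Proof.
move=> tP th vP /andP[vt]; case: ifP => [_ /existsP[i /andP[Ct /eqP ->]]|cl /eqP ->].
  by have [] := th v i vP; [exists t; rewrite eq_sym | ].
by have [] := sweep_is_nb th vP (negbT cl).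
Qed.

Lemma greedy_edges_cons P v w vs : greedy_edges P v (w :: vs) =
  if clean P v then (v, w) :: greedy_edges P w vs else greedy_edges P w vs.
Proof. by []. Qed.

Lemma inT_next_greedy P nb t q v vs : t \in P -> theta4_graph P nb ->
  v \in P -> inT q v -> path (route_step P nb t) v vs ->
  (0 < size (greedy_edges P v vs))%N ->
  inT q (nth (0, 0) (greedy_edges P v vs) 0).1.
Proof.
move=> tP th; elim: vs v => [|w vs IH] v vP qv //=.
rewrite greedy_edges_cons => /andP[vw wvs]; case: ifP => cl //.
apply: IH wvs; first exact: route_step_in vw.
move: vw; rewrite /route_step cl => /andP[_ /eqP ->].
exact: inT_trans qv (sweep_nb_inT th vP (negbT cl)).
Qed.

Lemma greedy_edges_nth P nb t v vs : t \in P -> theta4_graph P nb ->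
  v \in P -> path (route_step P nb t) v vs ->
  forall j, (j.+1 < size (greedy_edges P v vs))%N ->
  let e := nth (0, 0) (greedy_edges P v vs) j in
  [/\ clean P e.1, e.1 \in P, route_step P nb t e.1 e.2 &
      inT e.2 (nth (0, 0) (greedy_edges P v vs) j.+1).1].
Proof.
move=> tP th; elim: vs v => [|w vs IH] v vP //=.
rewrite greedy_edges_cons => /andP[vw wvs] j.
have wP := route_step_in tP th vP vw.
case: ifP => cl; last exact: IH.
case: j => [|j] /= Hj; last exact: IH.
by split=> //; apply: inT_next_greedy wvs Hj => //; apply: inT_refl.
Qed.

Lemma greedy_step_antidiag P nb p q : (0, 0) \in P -> theta4_graph P nb ->
  p \in P -> clean P p -> route_step P nb (0, 0) p q -> antidiag p q.
Proof.
move=> tP th pP cl /andP[pt]; rewrite cl => /existsP[i /andP[Ct /eqP ->]].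
have tp : (0, 0) != p by rewrite eq_sym.
have [_ _ Cq _] : is_nb P p i (nb p i) by apply: th => //; exists (0, 0).
have /negP not_T := clean_notin_T cl tP tp.
rewrite antidiagE.
case: i Ct Cq => [[|[|[|[|k]]]] Hi] //; rewrite /inC /= => Ct Cq; rewrite ?Cq ?orbT //.
all: by case: not_T; apply: origin_in_T; rewrite Ct ?orbT.
Qed.

End Theta4Routing.

Theorem lemma4 (R : realFieldType) (P : seq (R * R)) (s t : R * R)
    (nb : R * R -> 'I_4 -> R * R) (vs : seq (R * R)) :
  s \in P -> t \in P -> s != t ->
  t = (0, 0) ->
  s.1 <= 0 -> 0 <= s.2 -> s.1 + s.2 < 0 ->
  theta4_graph P nb ->
  path (route_step P nb t) s vs -> last s vs = t ->
  forall j : nat, (j.+1 < size (greedy_edges P s vs))%N ->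
    let gs := greedy_edges P s vs in
    let p := (nth (0, 0) gs j).1 in
    let q := (nth (0, 0) gs j).2 in
    let p' := (nth (0, 0) gs j.+1).1 in
    Phi p q p' <= 2%:R * L1 (bar p) (bar q).
Proof.
move=> sP tP _ Et _ _ _ th route _ j Hj /=; subst t.
have [cl pP step Tq] := greedy_edges_nth tP th sP route Hj.
exact: Phi_le_antidiag (greedy_step_antidiag tP th pP cl step) (L1_bar_inT Tq).
Qed.
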